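(* Let $H_1$ and $H_2$ be graphs such that either (i) $m_2(H_1) > m_2(H_2) > 1$, $H_2$ is strictly $2$-balanced and $H_1$ is strictly balanced with respect to $d_2(\cdot,H_2)$; or (ii) $m_2(H_1) = m_2(H_2) > 1$ and $H_1$ and $H_2$ are both strictly $2$-balanced. Then $H_1$ and $H_2$ are both $2$-connected.
   Context: For a graph $H$ write $v_H=|V(H)|$, $e_H=|E(H)|$. Define $d_2(H) = (e_H-1)/(v_H-2)$ if $H$ is non-empty and $v_H \geq 3$; $d_2(K_2)=1/2$; $d_2(H)=0$ otherwise. Let $m_2(H)=\max\{d_2(J) : J \subseteq H\}$. $H$ is strictly $2$-balanced if $d_2(J) < m_2(H)$ for every proper subgraph $J \subsetneq H$. For graphs $H_1,H_2$ define $d_2(H_1,H_2) = e_{H_1}/(v_{H_1} - 2 + 1/m_2(H_2))$ if $H_2$ is non-empty and $v_{H_1} \geq 2$, and $0$ otherwise; $m_2(H_1,H_2) = \max\{d_2(J,H_2) : J \subseteq H_1\}$. $H_1$ is strictly balanced with respect to $d_2(\cdot,H_2)$ if $d_2(J,H_2) < m_2(H_1,H_2)$ for every proper subgraph $J \subsetneq H_1$. *)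

From HB Require Import structures.
From mathcomp Require Import all_boot all_order all_algebra.
Set Implicit Arguments. Unset Strict Implicit. Unset Printing Implicit Defensive.
Import Order.TTheory GRing.Theory Num.Theory.
Local Open Scope ring_scope.

(* A finite simple graph: vertex type V : finType, adjacency e : rel V,
   assumed symmetric and irreflexive (hypotheses of the theorem). *)

Definition Eset (V : finType) (e : rel V) : {set {set V}} :=
  [set A : {set V} | [exists x, exists y, [&& x != y, e x y & A == [set x; y]]]].

Definition subgraphb (V : finType) (e : rel V)
    (J : {set V} * {set {set V}}) : bool :=
  (J.2 \subset Eset e) && [forall A in J.2, A \subset J.1].

Definition whole (V : finType) (e : rel V) : {set V} * {set {set V}} :=
  ([set: V], Eset e).

Definition d2 (v m : nat) : rat :=
  if (0 < m)%N && (3 <= v)%N then (m%:R - 1) / (v%:R - 2)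
  else if (v == 2)%N && (m == 1)%N then 1 / 2
  else 0.

Definition d2J (V : finType) (J : {set V} * {set {set V}}) : rat :=
  d2 #|J.1| #|J.2|.

(* m_2(H) = max over subgraphs J of d_2(J) (all values are >= 0). *)
Definition m2 (V : finType) (e : rel V) : rat :=
  \big[Num.max/0]_(J : {set V} * {set {set V}} | subgraphb e J) d2J J.

Definition strictly_2_balanced (V : finType) (e : rel V) : Prop :=
  forall J, subgraphb e J -> J != whole e -> d2J J < m2 e.

Definition d2_2 (v m : nat) (V2 : finType) (e2 : rel V2) : rat :=
  if (0 < #|Eset e2|)%N && (2 <= v)%N
  then m%:R / (v%:R - 2 + (m2 e2)^-1) else 0.

Definition d2_2J (V1 : finType) (J : {set V1} * {set {set V1}})
    (V2 : finType) (e2 : rel V2) : rat :=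
  d2_2 #|J.1| #|J.2| e2.

Definition m2_2 (V1 : finType) (e1 : rel V1) (V2 : finType) (e2 : rel V2) : rat :=
  \big[Num.max/0]_(J : {set V1} * {set {set V1}} | subgraphb e1 J) d2_2J J e2.

Definition strictly_balanced_wrt (V1 : finType) (e1 : rel V1)
    (V2 : finType) (e2 : rel V2) : Prop :=
  forall J, subgraphb e1 J -> J != whole e1 -> d2_2J J e2 < m2_2 e1 e2.

Definition connected_on (V : finType) (e : rel V) (S : {set V}) : Prop :=
  forall x y, x \in S -> y \in S ->
    connect [rel a b | [&& e a b, a \in S & b \in S]] x y.

(* 2-connected (Diestel): more than 2 vertices, and H - X connected
   for every set X of fewer than 2 vertices. *)
Definition two_connected (V : finType) (e : rel V) : Prop :=
  (3 <= #|V|)%N /\ connected_on e [set: V] /\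
  forall v : V, connected_on e [set~ v].

From mathcomp Require Import all_boot all_order all_algebra.
From mathcomp Require Import zify ring lra.
Set Implicit Arguments. Unset Strict Implicit. Unset Printing Implicit Defensive.
Import Order.TTheory GRing.Theory Num.Theory.
Local Open Scope ring_scope.

(* For both density notions the hypotheses give constants d > 0 and k > 1 with
   e(J) <= d (v(J) - k) for every induced subgraph J on at least two vertices
   and e(H) = d (v(H) - k): for d_2 take d = m_2(H), k = 2 - 1/m_2(H), and for
   d_2(., H_2) take d = m_2(H_1, H_2), k = 2 - 1/m_2(H_2); strict balancedness
   makes H itself attain the maximum, and m_2 > 1 gives k > 1.  If deleting a
   set X of at most one vertex disconnected H, a component P of H - X would
   give a cover of E(H) by the subgraphs induced on S_1 = P u X and S_2 = V - P,
   which meet in at most one vertex and have at least two vertices each (no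
   vertex is isolated, by the same count with S_1 = V - a, S_2 = {a, b}); then
   d (v(H) - k) = e(H) <= e(S_1) + e(S_2) <= d (v(H) + 1 - 2k) < d (v(H) - k). *)

Section BigmaxStrict.
Variables (disp : Order.disp_t) (T : orderType disp) (I : finType).
Local Open Scope order_scope.

Lemma eq_bigmax_strict (P : pred I) (F : I -> T) (x0 : T) (j : I) :
  P j -> x0 < \big[Order.max/x0]_(i | P i) F i ->
  (forall i, P i -> i != j -> F i < \big[Order.max/x0]_(i | P i) F i) ->
  F j = \big[Order.max/x0]_(i | P i) F i.
Proof.
move=> Pj x0_lt F_lt; apply/eqP; rewrite eq_le le_bigmax_cond //= leNgt.
apply/negP => Fj_lt.
suff : \big[Order.max/x0]_(i | P i) F i < \big[Order.max/x0]_(i | P i) F i.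
  by rewrite ltxx.
by apply: bigmax_lt => // i Pi; have [->|] := eqVneq i j; [exact: Fj_lt | exact: F_lt].
Qed.

End BigmaxStrict.

Section InducedEdges.
Variables (V : finType) (e : rel V).

Definition induced_edges (S : {set V}) : {set {set V}} :=
  [set A in Eset e | A \subset S].

Lemma EsetP (A : {set V}) :
  reflect (exists x y, [/\ x != y, e x y & A = [set x; y]]) (A \in Eset e).
Proof.
rewrite inE; apply: (iffP existsP) => [[x /existsP[y /and3P[xy exy /eqP ->]]]|].
  by exists x, y.
by case=> x [y [xy exy ->]]; exists x; apply/existsP; exists y; rewrite xy exy eqxx.
Qed.

Lemma induced_subgraphb (S : {set V}) : subgraphb e (S, induced_edges S).
Proof.
apply/andP; split; first by apply/subsetP => A; rewrite inE => /andP[].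
by apply/forallP => A; apply/implyP; rewrite inE => /andP[].
Qed.

Lemma whole_subgraphb : subgraphb e (whole e).
Proof. by apply/andP; split => //; apply/forallP => A; rewrite subsetT implybT. Qed.

Lemma card_induced_edges_le1 (S : {set V}) :
  (#|S| <= 2)%N -> (#|induced_edges S| <= 1)%N.
Proof.
move=> S_le2; rewrite -(cards1 S); apply/subset_leq_card/subsetP => A.
rewrite inE => /andP[/EsetP[x [y [xy _ ->]]] xyS].
by rewrite in_set1 eqEcard xyS (leq_trans S_le2) // cards2 xy.
Qed.

Lemma Eset_sub_inducedU (S1 S2 : {set V}) :
  (forall x y, e x y -> (x \in S1) && (y \in S1) || (x \in S2) && (y \in S2)) ->
  Eset e \subset induced_edges S1 :|: induced_edges S2.
Proof.
move=> cover; apply/subsetP => A EA; have /EsetP[x [y [_ exy eA]]] := EA.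
move: EA; rewrite !inE => -> /=; rewrite eA !subUset !sub1set; exact: cover.
Qed.

End InducedEdges.

Section AffineDensity.
Variables (V : finType) (e : rel V).
Hypotheses (sym_e : symmetric e) (irr_e : irreflexive e).
Variables (d k : rat).
Hypotheses (d_gt0 : 0 < d) (k_gt1 : 1 < k).
Hypothesis dense_whole : d * (#|V|%:R - k) <= #|Eset e|%:R.
Hypothesis sparse_induced : forall S : {set V},
  (2 <= #|S|)%N -> #|induced_edges e S|%:R <= d * (#|S|%:R - k).

Lemma card_ge2_edge (S : {set V}) x y :
  e x y -> x \in S -> y \in S -> (2 <= #|S|)%N.
Proof.
move=> exy xS yS; have xy : x != y by apply: contraTneq exy => ->; rewrite irr_e.
apply: leq_trans (_ : 2 <= #|[set x; y]|)%N (subset_leq_card _); first by rewrite cards2 xy.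
by apply/subsetP => z; rewrite !inE => /orP[] /eqP ->.
Qed.

Lemma no_sparse_cover (S1 S2 : {set V}) :
  (2 <= #|S1|)%N -> (2 <= #|S2|)%N -> (#|S1 :&: S2| <= 1)%N ->
  (forall x y, e x y -> (x \in S1) && (y \in S1) || (x \in S2) && (y \in S2)) ->
  False.
Proof.
move=> S1_ge2 S2_ge2 S12_le1 cover.
have edges : (#|Eset e| <= #|induced_edges e S1| + #|induced_edges e S2|)%N.
  exact: leq_trans (subset_leq_card (Eset_sub_inducedU cover)) (leq_card_setU _ _).
have verts : (#|S1| + #|S2| <= #|V| + 1)%N.
  by rewrite -cardsUI leq_add ?max_card.
move: edges verts (sparse_induced S1_ge2) (sparse_induced S2_ge2) dense_whole.
rewrite -!(ler_nat rat) !natrD => edges /(ler_wpM2l (ltW d_gt0)) verts *.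
have : 0 < d * (k - 1) by rewrite mulr_gt0 ?subr_gt0.
lra.
Qed.

Lemma exists_neighbor : (3 <= #|V|)%N -> forall a, exists b, e a b.
Proof.
move=> V_ge3 a; apply/existsP/contraT; rewrite negb_exists => /forallP a_isolated.
have [b] : exists b, b \in [set~ a] by apply/card_gt0P; rewrite cardsC1; lia.
rewrite !inE => ba; exfalso; apply: (@no_sparse_cover [set~ a] [set a; b]).
- by rewrite cardsC1; lia.
- by rewrite cards2 eq_sym ba.
- rewrite -(cards1 b); apply/subset_leq_card/subsetP => z.
  by rewrite !inE => /andP[/negPf-> /=].
- move=> x y exy; have xa : x != a by apply: contraTneq exy => ->; rewrite a_isolated.
  have ya : y != a by apply: contraTneq exy => ->; rewrite sym_e a_isolated.
  by rewrite !inE xa ya.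
Qed.

Lemma connected_setC_small (X : {set V}) :
  (#|X| <= 1)%N -> (3 <= #|V|)%N -> connected_on e (~: X).
Proof.
move=> X_le1 V_ge3 x y; rewrite !in_setC => xX yX.
set r := [rel a b | [&& e a b, a \in ~: X & b \in ~: X]].
have r_csym : connect_sym r.
  by apply: sym_connect_sym => u w /=; rewrite sym_e [(u \in _) && _]andbC.
apply: contraT => not_xy; set P := [set z in ~: X | connect r x z].
have P_closed a b : e a b -> a \notin X -> b \notin X -> (a \in P) = (b \in P).
  move=> eab aX bX; rewrite !inE aX bX; apply: (connect_closed r_csym).
  by rewrite /= eab !inE aX bX.
have P_out z : z \in X -> (z \in P) = false by rewrite !inE => ->.
have xP : x \in P by rewrite !inE xX connect0.
have yP : (y \in P) = false by rewrite !inE yX (negPf not_xy).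
exfalso; apply: (@no_sparse_cover (P :|: X) (~: P)).
- have [b exb] := exists_neighbor V_ge3 x.
  apply: (card_ge2_edge exb); rewrite in_setU ?xP //.
  by case bX: (b \in X); [rewrite orbT | rewrite orbF -(P_closed x) ?bX].
- have [b eyb] := exists_neighbor V_ge3 y.
  apply: (card_ge2_edge eyb); rewrite in_setC ?yP //.
  by case bX: (b \in X); [rewrite P_out | rewrite -(P_closed y) ?bX ?yP].
- by rewrite setIUl setICr set0U (leq_trans _ X_le1) ?subset_leq_card ?subsetIl.
- move=> u w euw; rewrite !in_setU !in_setC.
  case uX: (u \in X); case wX: (w \in X) => /=.
  + by move: (card_ge2_edge euw uX wX); rewrite ltnNge X_le1.
  + by rewrite P_out //=; case: (w \in P).
  + by rewrite (P_out w) // andbT; case: (u \in P).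
  + by rewrite (P_closed u w) ?uX ?wX //; case: (w \in P).
Qed.

Lemma two_connected_of_affine_density : (3 <= #|V|)%N -> two_connected e.
Proof.
move=> V_ge3; split; last split.
- exact: V_ge3.
- by rewrite -setC0; apply: connected_setC_small; rewrite ?cards0.
- by move=> v; apply: connected_setC_small; rewrite ?cards1.
Qed.

End AffineDensity.

Lemma d2_le1 (v m : nat) : ~~ ((0 < m)%N && (3 <= v)%N) -> d2 v m <= 1.
Proof.
by rewrite /d2 => /negPf->; case: ifP => _; rewrite ?ler01 // ler_pdivrMr ?mul1r.
Qed.

(* The hypothesis on v = 2 is needed since d2 2 m = 0 for m >= 2. *)
Lemma d2_le_affine (v m : nat) (d : rat) : 0 < d -> (2 <= v)%N ->
  (v = 2 -> m <= 1)%N -> d2 v m <= d -> m%:R <= d * (v%:R - (2 - d^-1)).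
Proof.
move=> d_gt0 v_ge2 m_le1 d2_le.
have -> : d * (v%:R - (2 - d^-1)) = d * (v%:R - 2) + 1 by field; rewrite gt_eqF.
have v_ge2' : (2 : rat) <= v%:R by rewrite ler_nat.
have : 0 <= d * (v%:R - 2) by rewrite mulr_ge0 ?subr_ge0 // ltW.
have [/andP[m_gt0 v_ge3]|small] := boolP ((0 < m)%N && (3 <= v)%N).
  move: d2_le; rewrite /d2 m_gt0 v_ge3 /= ler_pdivrMr ?subr_gt0 ?ltr_nat //; lra.
have : m%:R <= 1 :> rat by rewrite lern1; move: small m_le1; lia.
lra.
Qed.

Lemma d2_ge_affine (v m : nat) (d : rat) : 0 < d -> (0 < m)%N -> (3 <= v)%N ->
  d <= d2 v m -> d * (v%:R - (2 - d^-1)) <= m%:R.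
Proof.
move=> d_gt0 m_gt0 v_ge3; rewrite /d2 m_gt0 v_ge3 /=.
have -> : d * (v%:R - (2 - d^-1)) = d * (v%:R - 2) + 1 by field; rewrite gt_eqF.
rewrite ler_pdivlMr ?subr_gt0 ?ltr_nat //; lra.
Qed.

Lemma m2_gt1_cards (V : finType) (e : rel V) :
  1 < m2 e -> (0 < #|Eset e|)%N /\ (3 <= #|V|)%N.
Proof.
move=> m2_gt1; apply/andP; move: m2_gt1; apply: contraTT => sparse.
rewrite -leNgt; apply: bigmax_le => [|J /andP[JE _]]; first exact: ler01.
apply: d2_le1; apply: contra sparse => /andP[J2_gt0 J1_ge3].
by rewrite (leq_trans J2_gt0 (subset_leq_card JE)) (leq_trans J1_ge3 (max_card _)).
Qed.

Lemma d2_2_affine (v m : nat) (V2 : finType) (e2 : rel V2) :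
  (0 < #|Eset e2|)%N -> (2 <= v)%N ->
  d2_2 v m e2 = m%:R / (v%:R - (2 - (m2 e2)^-1)).
Proof. by move=> E2_gt0 v_ge2; rewrite /d2_2 E2_gt0 v_ge2 /=; congr (_ / _); ring. Qed.

Lemma strictly_2_balanced_two_connected (V : finType) (e : rel V) :
  symmetric e -> irreflexive e -> 1 < m2 e -> strictly_2_balanced e ->
  two_connected e.
Proof.
move=> sym_e irr_e m2_gt1 balanced.
have [E_gt0 V_ge3] := m2_gt1_cards m2_gt1.
have m2_gt0 : 0 < m2 e by apply: lt_trans m2_gt1.
have whole_max := eq_bigmax_strict (whole_subgraphb e) m2_gt0 balanced.
apply: (two_connected_of_affine_density sym_e irr_e (d := m2 e)
                                        (k := 2 - (m2 e)^-1)) => //.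
- have : (m2 e)^-1 < 1 by rewrite invf_lt1.
  lra.
- by apply: d2_ge_affine => //; move: whole_max; rewrite /d2J /= cardsT => ->.
- move=> S S_ge2; apply: d2_le_affine => //.
    by move=> S2; apply: card_induced_edges_le1; rewrite S2.
  exact: (le_bigmax_cond 0 _ (induced_subgraphb e S) : d2J _ <= m2 e).
Qed.

Lemma strictly_balanced_wrt_two_connected (V1 V2 : finType)
    (e1 : rel V1) (e2 : rel V2) :
  symmetric e1 -> irreflexive e1 -> 1 < m2 e1 -> 1 < m2 e2 ->
  strictly_balanced_wrt e1 e2 -> two_connected e1.
Proof.
move=> sym1 irr1 m21_gt1 m22_gt1 balanced.
have [E1_gt0 V1_ge3] := m2_gt1_cards m21_gt1.
have [E2_gt0 _] := m2_gt1_cards m22_gt1.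
set k := 2 - (m2 e2)^-1.
have [k_gt1 k_lt2] : 1 < k /\ k < 2.
  have : 0 < (m2 e2)^-1 by rewrite invr_gt0 (lt_trans ltr01).
  have : (m2 e2)^-1 < 1 by rewrite invf_lt1 // (lt_trans ltr01).
  rewrite /k; lra.
have shift_gt0 (v : nat) : (2 <= v)%N -> 0 < v%:R - k.
  by rewrite -(ler_nat rat) => *; lra.
have V1_shift_gt0 := shift_gt0 _ (ltnW V1_ge3).
have whole_val : d2_2J (whole e1) e2 = #|Eset e1|%:R / (#|V1|%:R - k).
  by rewrite /d2_2J /= cardsT d2_2_affine // ltnW.
have m2_2_gt0 : 0 < m2_2 e1 e2.
  have whole_gt0 : 0 < d2_2J (whole e1) e2.
    by rewrite whole_val divr_gt0 ?ltr0n.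
  exact: lt_le_trans whole_gt0 (le_bigmax_cond 0 _ (whole_subgraphb e1)).
have whole_max := eq_bigmax_strict (whole_subgraphb e1) m2_2_gt0 balanced.
apply: (two_connected_of_affine_density sym1 irr1 (d := m2_2 e1 e2) (k := k)) => //.
- by rewrite -ler_pdivlMr // -whole_val whole_max.
- move=> S S_ge2; rewrite -ler_pdivrMr ?shift_gt0 // -d2_2_affine //.
  exact: (le_bigmax_cond 0 _ (induced_subgraphb e1 S) : d2_2J _ e2 <= m2_2 e1 e2).
Qed.

Theorem lemma4p1 (V1 V2 : finType) (e1 : rel V1) (e2 : rel V2)
  (sym1 : symmetric e1) (irr1 : irreflexive e1)
  (sym2 : symmetric e2) (irr2 : irreflexive e2) :
  ((m2 e2 < m2 e1) /\ (1 < m2 e2) /\ strictly_2_balanced e2 /\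
     strictly_balanced_wrt e1 e2)
  \/ ((m2 e1 = m2 e2) /\ (1 < m2 e2) /\ strictly_2_balanced e1 /\
     strictly_2_balanced e2) ->
  two_connected e1 /\ two_connected e2.
Proof.
case=> [[m2_lt [m22_gt1 [balanced2 balanced1]]] | [m2_eq [m22_gt1 [balanced1 balanced2]]]].
  split; last exact: strictly_2_balanced_two_connected balanced2.
  exact: strictly_balanced_wrt_two_connected (lt_trans m22_gt1 m2_lt) m22_gt1 balanced1.
split; last exact: strictly_2_balanced_two_connected balanced2.
by apply: strictly_2_balanced_two_connected; rewrite ?m2_eq.
Qed.
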